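(* Let $\mathit{Vee}$ be the graph with vertices $u_1,u_2,u_3$ and edges $(u_1,u_2),(u_1,u_3)$, and let $\vec C_3$ be the directed 3-cycle with vertices $v_1,v_2,v_3$ and edges $(v_1,v_2),(v_2,v_3),(v_3,v_1)$. Then $\hom(\mathit{Vee},T)\ge\hom(\vec C_3,T)$ for every graph $T$, and $\mathsf{HDE}(\mathit{Vee},\vec C_3)=1$.
   Context: Graphs are finite directed graphs (loops allowed); a homomorphism $F\to T$ is a vertex map sending edges to edges, and $\hom(F,T)$ is their number. For $F\to G$, $\mathsf{HDE}(F,G)=\sup\{c\in\mathbb R:\hom(F,T)\ge\hom(G,T)^c\text{ for all graphs }T\}$. *)

From Stdlib Require Import Reals.
From mathcomp Require Import all_boot.
Set Implicit Arguments. Unset Strict Implicit. Unset Printing Implicit Defensive.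

Definition hom (V W : finType) (eF : rel V) (eT : rel W) : nat :=
  #|[pred f : {ffun V -> W} | [forall x, forall y, eF x y ==> eT (f x) (f y)]]|.

(* The real power b^c for a natural base b and real exponent c, compared
   with a:  "a >= b^c", with the conventions 0^c = 0 for c > 0,
   0^0 = 1, and 0^c = +infinity for c < 0. *)
Definition ge_pow (a b : nat) (c : R) : Prop :=
  if b == 0%N then (Rlt (IZR 0) c \/ (c = (IZR 0) /\ (1 <= a)%N))
  else Rle (Rpower (INR b) c) (INR a).

Definition HDE_set (VF VG : finType) (eF : rel VF) (eG : rel VG) (c : R) : Prop :=
  forall (W : finType) (eT : rel W), ge_pow (hom eF eT) (hom eG eT) c.

Definition HDE_is (VF VG : finType) (eF : rel VF) (eG : rel VG) (x : R) : Prop :=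
  is_lub (HDE_set eF eG) x.

(* Vee: vertices u1,u2,u3 = 0,1,2 with edges (u1,u2),(u1,u3). *)
Definition vee_edge : rel 'I_3 :=
  fun x y => (nat_of_ord x == 0%N) && ((nat_of_ord y == 1%N) || (nat_of_ord y == 2%N)).

Definition c3_edge : rel 'I_3 :=
  fun x y => [|| (nat_of_ord x == 0%N) && (nat_of_ord y == 1%N),
                 (nat_of_ord x == 1%N) && (nat_of_ord y == 2%N)
               | (nat_of_ord x == 2%N) && (nat_of_ord y == 0%N)].

(* Every directed triangle (x, y, z) of T is weighted by t(z,x) / t(x,y), where t(x,y) is the
   number of triangles through the arc (x,y).  By AM-GM, the three rotations of a triangle carry
   total weight at least 3, so the total weight is at least hom(C3,T).  On the other hand
   t(z,x) <= outdeg x, and the triangles on the arc (x,y) number exactly t(x,y), so the weight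
   on that arc is at most outdeg x; summing over arcs gives sum_x outdeg(x)^2 = hom(Vee,T).
   Taking T = C3, where both counts are 3, shows that no exponent above 1 works. *)

From Stdlib Require Import Reals.
From mathcomp Require Import all_boot all_order all_algebra.
From mathcomp Require Import ring lra.
Import Order.TTheory GRing.Theory Num.Theory.
Set Implicit Arguments. Unset Strict Implicit. Unset Printing Implicit Defensive.

Definition o0 : 'I_3 := @Ordinal 3 0 isT.
Definition o1 : 'I_3 := @Ordinal 3 1 isT.
Definition o2 : 'I_3 := @Ordinal 3 2 isT.

Lemma ord3_ind (P : 'I_3 -> Prop) : P o0 -> P o1 -> P o2 -> forall i, P i.
Proof.
move=> P0 P1 P2 [[|[|[|n]]] lt_n3] //.
- by rewrite (_ : Ordinal lt_n3 = o0) //; apply: val_inj.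
- by rewrite (_ : Ordinal lt_n3 = o1) //; apply: val_inj.
- by rewrite (_ : Ordinal lt_n3 = o2) //; apply: val_inj.
Qed.

Lemma forall_ord3 (P : pred 'I_3) : [forall i, P i] = [&& P o0, P o1 & P o2].
Proof. by apply/forallP/and3P => [H | [P0 P1 P2]]; last apply: ord3_ind. Qed.

Section MapsFromThreeVertices.
Variable W : finType.

Definition ffun3 (a b c : W) : {ffun 'I_3 -> W} :=
  [ffun i : 'I_3 => if val i == 0 then a else if val i == 1 then b else c].

Lemma ffun3E a b c : [/\ ffun3 a b c o0 = a, ffun3 a b c o1 = b & ffun3 a b c o2 = c].
Proof. by rewrite !ffunE. Qed.

Lemma card_ffun3 (P : pred {ffun 'I_3 -> W}) :
  #|P| = (\sum_a \sum_b \sum_c P (ffun3 a b c))%N.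
Proof.
rewrite -sum1_card (reindex (fun t : W * W * W => ffun3 t.1.1 t.1.2 t.2)) /=.
  rewrite big_mkcond pair_big pair_big /=.
  by apply: eq_bigr => -[[a b] c] _; rewrite /in_mem /=; case: (P _).
exists (fun f => (f o0, f o1, f o2)) => [[[a b] c] | f] _ /=; first by rewrite !ffunE.
by apply/ffunP; apply: ord3_ind; rewrite ffunE.
Qed.

End MapsFromThreeVertices.

Section HomomorphismCounts.
Variables (W : finType) (e : rel W).

Definition outdeg x : nat := \sum_y e x y.

Definition triangle x y z : bool := [&& e x y, e y z & e z x].

Definition arc_triangles x y : nat := \sum_z (e y z && e z x).

Lemma triangle_rotate x y z : triangle y z x = triangle x y z.
Proof. by rewrite /triangle; case: (e x y); case: (e y z); case: (e z x). Qed.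

Lemma hom_c3E : hom c3_edge e = (\sum_x \sum_y \sum_z triangle x y z)%N.
Proof.
rewrite /hom card_ffun3; apply: eq_bigr => a _; apply: eq_bigr => b _.
apply: eq_bigr => c _; rewrite /= !forall_ord3 /c3_edge /triangle /=.
by have [-> -> ->] := ffun3E a b c; case: (e a b); case: (e b c); case: (e c a).
Qed.

Lemma hom_veeE : hom vee_edge e = (\sum_x \sum_y e x y * outdeg x)%N.
Proof.
rewrite /hom card_ffun3; apply: eq_bigr => a _; apply: eq_bigr => b _.
rewrite /outdeg big_distrr; apply: eq_bigr => c _; rewrite /= !forall_ord3 /vee_edge /=.
by have [-> -> ->] := ffun3E a b c; case: (e a b); case: (e a c).
Qed.

Lemma sum_triangle x y : (\sum_z triangle x y z = e x y * arc_triangles x y)%N.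
Proof.
rewrite /arc_triangles big_distrr; apply: eq_bigr => z _.
by rewrite /triangle; case: (e x y); case: (e y z && e z x).
Qed.

Lemma arc_triangles_gt0 x y z : triangle x y z -> (0 < arc_triangles x y)%N.
Proof. by case/and3P => _ eyz ezx; rewrite /arc_triangles (bigD1 z) //= eyz ezx. Qed.

Lemma arc_triangles_le_outdeg x y : (arc_triangles x y <= outdeg y)%N.
Proof. by apply: leq_sum => z _; case: (e y z); case: (e z x). Qed.

End HomomorphismCounts.

Section AMGM.
Local Open Scope ring_scope.

Lemma amgm3_cyclic_min (R : realDomainType) (p q r : R) :
  0 <= p -> p <= q -> p <= r -> 3 * p * q * r <= p ^+ 2 * r + q ^+ 2 * p + r ^+ 2 * q.
Proof.
move=> p_ge0 le_pq le_pr; rewrite -subr_ge0.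
have -> : p ^+ 2 * r + q ^+ 2 * p + r ^+ 2 * q - 3 * p * q * r =
    p * (q - r) ^+ 2 + p * (q - p) * (r - p) + (q - p) * (r - p) ^+ 2 by ring.
have [qp_ge0 rp_ge0] : 0 <= q - p /\ 0 <= r - p by rewrite !subr_ge0.
rewrite !addr_ge0 //.
- exact: mulr_ge0 p_ge0 (sqr_ge0 _).
- by rewrite !mulr_ge0.
- exact: mulr_ge0 qp_ge0 (sqr_ge0 _).
Qed.

(* Both sides are invariant under the rotation (p, q, r) -> (q, r, p), so p may be taken minimal. *)
Lemma amgm3_cyclic (R : realDomainType) (p q r : R) :
  0 <= p -> 0 <= q -> 0 <= r -> 3 * p * q * r <= p ^+ 2 * r + q ^+ 2 * p + r ^+ 2 * q.
Proof.
move=> p_ge0 q_ge0 r_ge0.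
have [le_pq | lt_qp] := lerP p q; have [le_pr | lt_rp] := lerP p r.
- exact: amgm3_cyclic_min.
- by have := amgm3_cyclic_min r_ge0 (ltW lt_rp) (le_trans (ltW lt_rp) le_pq); lra.
- by have := amgm3_cyclic_min q_ge0 (le_trans (ltW lt_qp) le_pr) (ltW lt_qp); lra.
- have [le_qr | lt_rq] := lerP q r.
    by have := amgm3_cyclic_min q_ge0 le_qr (ltW lt_qp); lra.
  by have := amgm3_cyclic_min r_ge0 (ltW lt_rp) (ltW lt_rq); lra.
Qed.

Lemma amgm3_ratio (R : realFieldType) (a b c : R) :
  0 < a -> 0 < b -> 0 < c -> 3 <= c / a + a / b + b / c.
Proof.
move=> a_gt0 b_gt0 c_gt0.
have abc_gt0 : 0 < a * b * c by rewrite !mulr_gt0.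
have -> : c / a + a / b + b / c =
    3 + (a ^+ 2 * c + b ^+ 2 * a + c ^+ 2 * b - 3 * a * b * c) / (a * b * c).
  by field; rewrite !lt0r_neq0.
rewrite lerDl divr_ge0 ?subr_ge0 ?(ltW abc_gt0) //.
by apply: amgm3_cyclic; apply: ltW.
Qed.

End AMGM.

Section TripleSums.
Local Open Scope ring_scope.
Variables (M : nmodType) (I : finType).

Lemma triple_sum_rotate (F : I -> I -> I -> M) :
  \sum_x \sum_y \sum_z F x y z = \sum_x \sum_y \sum_z F y z x.
Proof. by rewrite [RHS]exchange_big; apply: eq_bigr => y _; rewrite exchange_big. Qed.

Lemma triple_sumD (F G : I -> I -> I -> M) :
  \sum_x \sum_y \sum_z (F x y z + G x y z) =
  \sum_x \sum_y \sum_z F x y z + \sum_x \sum_y \sum_z G x y z.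
Proof.
rewrite -big_split; apply: eq_bigr => x _.
by rewrite -big_split; apply: eq_bigr => y _; rewrite -big_split.
Qed.

End TripleSums.

Section TriangleWeights.
Local Open Scope ring_scope.
Variables (W : finType) (e : rel W).

Let t x y : rat := (arc_triangles e x y)%:R.

Definition triangle_weight x y z : rat := (triangle e x y z)%:R * (t z x / t x y).

Lemma triangle_weight_rotations x y z :
  (triangle e x y z)%:R * 3 <=
  triangle_weight x y z + triangle_weight y z x + triangle_weight z x y.
Proof.
have rot_yzx := triangle_rotate e x y z; have rot_zxy := triangle_rotate e z x y.
rewrite /triangle_weight rot_yzx -rot_zxy -!mulrDr.
have [tri_xyz | _] := boolP (triangle e x y z); last by rewrite !mul0r.
have tri_yzx : triangle e y z x by rewrite rot_yzx.
have tri_zxy : triangle e z x y by rewrite -rot_zxy.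
rewrite !mul1r; apply: amgm3_ratio; rewrite ltr0n.
- exact: arc_triangles_gt0 tri_xyz.
- exact: arc_triangles_gt0 tri_yzx.
- exact: arc_triangles_gt0 tri_zxy.
Qed.

Lemma sum_triangle_weight x y : \sum_z triangle_weight x y z <= (e x y * outdeg e x)%:R.
Proof.
have le_weight z : triangle_weight x y z <= (triangle e x y z)%:R * ((outdeg e x)%:R / t x y).
  rewrite ler_wpM2l ?ler0n // ler_wpM2r ?invr_ge0 ?ler0n //.
  by rewrite ler_nat arc_triangles_le_outdeg.
apply: le_trans (ler_sum _ (fun z _ => le_weight z)) _.
rewrite -big_distrl /= -natr_sum sum_triangle natrM.
have [-> | t_neq0] := eqVneq (arc_triangles e x y) 0%N; first by rewrite !mulr0 mul0r.
by rewrite /t -mulrA [_ * (_ / _)]mulrC divfK ?pnatr_eq0 // natrM.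
Qed.

Lemma triangles_le_outdeg_sq :
  (\sum_x \sum_y \sum_z triangle e x y z <= \sum_x \sum_y e x y * outdeg e x)%N.
Proof.
pose w := triangle_weight.
have rot_yzx : \sum_x \sum_y \sum_z w y z x = \sum_x \sum_y \sum_z w x y z.
  exact: esym (triple_sum_rotate w).
have rot_zxy : \sum_x \sum_y \sum_z w z x y = \sum_x \sum_y \sum_z w x y z.
  exact: triple_sum_rotate.
have le_weights : \sum_x \sum_y \sum_z w x y z <= (\sum_x \sum_y e x y * outdeg e x)%:R.
  rewrite natr_sum; apply: ler_sum => x _.
  by rewrite natr_sum; apply: ler_sum => y _; apply: sum_triangle_weight.
have le_rotations : (\sum_x \sum_y \sum_z triangle e x y z)%:R * 3 <=
    \sum_x \sum_y \sum_z (w x y z + w y z x + w z x y).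
  rewrite natr_sum mulr_suml; apply: ler_sum => x _.
  rewrite natr_sum mulr_suml; apply: ler_sum => y _.
  by rewrite natr_sum mulr_suml; apply: ler_sum => z _; apply: triangle_weight_rotations.
rewrite !triple_sumD rot_yzx rot_zxy in le_rotations.
rewrite -(ler_nat rat); lra.
Qed.

End TriangleWeights.

Lemma hom_c3_le_vee (W : finType) (e : rel W) : (hom c3_edge e <= hom vee_edge e)%N.
Proof. by rewrite hom_c3E hom_veeE; apply: triangles_le_outdeg_sq. Qed.

Lemma hom_c3_c3 : hom c3_edge c3_edge = 3.
Proof. by rewrite hom_c3E !big_ord_recl !big_ord0. Qed.

Lemma hom_vee_c3 : hom vee_edge c3_edge = 3.
Proof. by rewrite hom_veeE /outdeg !big_ord_recl !big_ord0. Qed.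

Lemma ge_pow1 (a b : nat) : (b <= a)%N -> ge_pow a b (IZR 1).
Proof.
rewrite /ge_pow; have [_ _ | b_neq0 le_ba] := eqVneq b 0%N; first by left; exact: Rlt_0_1.
rewrite Rpower_1; first by apply/le_INR/ssrnat.leP.
by apply/lt_0_INR/ssrnat.ltP; rewrite lt0n.
Qed.

Lemma Rpower_le_base (b c : R) : Rlt (IZR 1) b -> Rle (Rpower b c) b -> Rle c (IZR 1).
Proof.
move=> gt1_b le_bc_b; apply: Rnot_lt_le => lt1_c.
apply: (Rlt_not_le _ _ _ le_bc_b).
rewrite -{1}(Rpower_1 b); first exact: Rpower_lt.
exact: Rlt_trans Rlt_0_1 gt1_b.
Qed.

Theorem mainTheorem7 :
  (forall (W : finType) (eT : rel W), (hom c3_edge eT <= hom vee_edge eT)%N)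
  /\ HDE_is vee_edge c3_edge (IZR 1).
Proof.
split; first exact: hom_c3_le_vee.
split=> [c c_in_HDE | b b_ub]; last by apply: b_ub => W eT; apply/ge_pow1/hom_c3_le_vee.
have := c_in_HDE _ c3_edge; rewrite /ge_pow hom_c3_c3 hom_vee_c3 /=.
by apply: Rpower_le_base; apply: (lt_1_INR 3); apply/ssrnat.ltP.
Qed.
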